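(* Fix $r>0$ and let $s(\ell)=\sinh^3\ell$, $s^{(-1)}$ its primitive vanishing at $0$ and $s^{(-2)}$ the primitive of $s^{(-1)}$ vanishing at $0$. Define, for $\ell\in[0,+\infty)$ and $\alpha,\beta\in[0,\pi/2)$, \[g(\ell,\alpha,\beta) =\frac43 \ell - \frac{s(\ell)}{9\tanh^2(r) \cos\alpha\cos\beta} +\frac{s^{(-1)}(\ell)}{3\tanh r}\left(\frac1{\cos\alpha}+\frac1{\cos\beta}\right) -s^{(-2)}(\ell),\] and $f(\alpha,\beta)=\sup_\ell g(\ell,\alpha,\beta)$. Then: (1) for each fixed $\alpha$, the maximum of $\ell\mapsto g(\ell,\alpha,\alpha)$ is attained at $\ell=2\operatorname{arctanh}(\tanh r\cos\alpha)$ and only there; (2) for all $\alpha,\beta$, $f(\alpha,\beta)\le \frac12\left(f(\alpha,\alpha)+f(\beta,\beta)\right)$, with equality only for $\alpha=\beta$. *)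

From Stdlib Require Import Reals.
From Coquelicot Require Import Coquelicot.
Open Scope R_scope.

Definition artanh (x : R) : R := / 2 * ln ((1 + x) / (1 - x)).

Definition s (l : R) : R := (sinh l) ^ 3.
Definition s_m1 (l : R) : R := RInt s 0 l.
Definition s_m2 (l : R) : R := RInt s_m1 0 l.

Definition gfun (r l a b : R) : R :=
  4 / 3 * l - s l / (9 * (tanh r) ^ 2 * cos a * cos b)
  + s_m1 l / (3 * tanh r) * (/ cos a + / cos b)
  - s_m2 l.

(* fsup r a b = f(a,b) = sup_{l >= 0} g(l,a,b) (finite, as the sup is attained) *)
Definition fsup (r a b : R) : R :=
  real (Lub_Rbar (fun y => exists l, 0 <= l /\ y = gfun r l a b)).

(* In the variables u = (1/x - 1)/2 with x = tanh r cos a (and v likewise for b), the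
   explicit primitives of sinh^3 give
     9 g = 9 g(l,0,0) - 2 (u + v) (s - 3 s^(-1)) - 4 u v s,   with s >= 3 s^(-1) on [0, oo),
   so replacing u and v by their geometric mean can only increase g.  On the diagonal
   u = v = k the l-derivative of g has the sign of k + 1 - k e^l, so the maximum is attained
   exactly at e^l = 1 + 1/k, i.e. l = 2 artanh x, with value phi(k)/9 where
   phi(k) = 6 ln(1 + 1/k) + 1/k + 1/(k + 1).  Finally phi is strictly midpoint convex in ln k:
   2 phi(sqrt(u v)) < phi(u) + phi(v) for u <> v, which combined with
   f(a,b) <= phi(sqrt(u v))/9 and f(a,a) = phi(u)/9 gives (2) and its equality case. *)

From Stdlib Require Import Reals Lra Psatz.
From Coquelicot Require Import Coquelicot.
Open Scope R_scope.

Definition sinh3_prim (l : R) : R := cosh l ^ 3 / 3 - cosh l + 2 / 3.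
Definition sinh3_prim2 (l : R) : R := sinh l ^ 3 / 9 - 2 * sinh l / 3 + 2 * l / 3.

Lemma continuous_s (x : R) : continuous s x.
Proof.
apply (@ex_derive_continuous R_AbsRing R_NormedModule). unfold s, sinh. auto_derive. easy.
Qed.

Lemma continuous_sinh3_prim (x : R) : continuous sinh3_prim x.
Proof.
apply (@ex_derive_continuous R_AbsRing R_NormedModule). unfold sinh3_prim, cosh. auto_derive. easy.
Qed.

Lemma s_m1_closed_form (l : R) : s_m1 l = sinh3_prim l.
Proof.
unfold s_m1. apply is_RInt_unique.
replace (sinh3_prim l) with (sinh3_prim l - sinh3_prim 0)
  by (unfold sinh3_prim; rewrite cosh_0; field).
apply (@is_RInt_derive R_CompleteNormedModule); intros x _.
- unfold sinh3_prim, cosh, s, sinh. auto_derive; [easy|].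
  rewrite exp_Ropp. field. apply Rgt_not_eq, exp_pos.
- apply continuous_s.
Qed.

Lemma s_m2_closed_form (l : R) : s_m2 l = sinh3_prim2 l.
Proof.
unfold s_m2. rewrite (RInt_ext _ sinh3_prim) by (intros; apply s_m1_closed_form).
apply is_RInt_unique.
replace (sinh3_prim2 l) with (sinh3_prim2 l - sinh3_prim2 0)
  by (unfold sinh3_prim2; rewrite sinh_0; field).
apply (@is_RInt_derive R_CompleteNormedModule); intros x _.
- unfold sinh3_prim2, sinh3_prim, cosh, sinh. auto_derive; [easy|].
  rewrite exp_Ropp. field. apply Rgt_not_eq, exp_pos.
- apply continuous_sinh3_prim.
Qed.

Lemma exp_ge1 (l : R) : 0 <= l -> 1 <= exp l.
Proof.
intros hl. rewrite <- exp_0. destruct hl as [hl | <-]; [left; apply exp_increasing | right]; easy.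
Qed.

Lemma sinh3_prim_le_s (l : R) : 0 <= l -> 3 * sinh3_prim l <= s l.
Proof.
intros hl. pose proof (exp_ge1 l hl) as hE.
assert (Hform : s l - 3 * sinh3_prim l = (exp l - 1) ^ 3 * (6 * exp l + 2) / (8 * exp l ^ 3)).
{ unfold s, sinh3_prim, sinh, cosh. rewrite exp_Ropp. field. lra. }
enough (0 <= (exp l - 1) ^ 3 * (6 * exp l + 2) / (8 * exp l ^ 3)) by lra.
apply Rmult_le_pos; [apply Rmult_le_pos; [apply pow_le|]; lra|].
apply Rlt_le, Rinv_0_lt_compat, Rmult_lt_0_compat; [lra | apply pow_lt; lra].
Qed.

Definition g_red (l u v : R) : R :=
  4 / 3 * l - s l * (1 + 2 * u) * (1 + 2 * v) / 9
  + sinh3_prim l * (2 + 2 * u + 2 * v) / 3 - sinh3_prim2 l.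

Lemma g_red_expand (l u v : R) :
  9 * g_red l u v = 9 * g_red l 0 0 - 2 * (u + v) * (s l - 3 * sinh3_prim l) - 4 * u * v * s l.
Proof. unfold g_red. field. Qed.

Lemma g_red_le_geomean (l u v : R) : 0 <= l -> 0 < u -> 0 < v ->
  g_red l u v <= g_red l (sqrt (u * v)) (sqrt (u * v)).
Proof.
intros hl hu hv.
assert (hamgm : 2 * sqrt (u * v) <= u + v).
{ rewrite sqrt_mult by lra.
  rewrite <- (sqrt_sqrt u), <- (sqrt_sqrt v) at 2 by lra.
  pose proof (pow2_ge_0 (sqrt u - sqrt v)). nra. }
assert (hsq : sqrt (u * v) * sqrt (u * v) = u * v) by (apply sqrt_sqrt; nra).
set (w := sqrt (u * v)) in *.
pose proof (sinh3_prim_le_s l hl).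
enough (9 * g_red l u v <= 9 * g_red l w w) by lra.
rewrite (g_red_expand l u v), (g_red_expand l w w).
assert (4 * w * w * s l = 4 * (u * v) * s l) by (rewrite <- hsq; ring).
assert (0 <= (u + v - 2 * w) * (s l - 3 * sinh3_prim l)) by (apply Rmult_le_pos; lra).
lra.
Qed.

Lemma strict_max_of_derive_sign (h dh : R -> R) (a m : R) :
  (forall x, is_derive h x (dh x)) ->
  (forall x, a < x < m -> 0 < dh x) ->
  (forall x, m < x -> dh x < 0) ->
  forall x, a <= x -> x <> m -> h x < h m.
Proof.
intros hd hpos hneg x hx hxm.
assert (mvt : forall y z, y < z -> exists c, h z - h y = dh c * (z - y) /\ y < c < z).
{ intros y z hyz. apply MVT_cor2; [easy|]. intros c _. apply is_derive_Reals, hd. }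
destruct (Rdichotomy _ _ hxm) as [hlt | hgt].
- destruct (mvt x m hlt) as [c [hc hcx]].
  assert (0 < dh c * (m - x)) by (apply Rmult_lt_0_compat; [apply hpos|]; lra).
  lra.
- destruct (mvt m x hgt) as [c [hc hcx]].
  assert (0 < - dh c * (x - m)).
  { apply Rmult_lt_0_compat; [|lra]. assert (dh c < 0) by (apply hneg; lra). lra. }
  lra.
Qed.

Definition g_red_diag_weight (k l : R) : R :=
  (1 + cosh l) * (k * (exp l - 1) + 1 + ((k + 1) * (1 - / exp l) + 1) / exp l) / 3.

Lemma g_red_diag_derive (k l : R) :
  is_derive (fun l => g_red l k k) l (g_red_diag_weight k l * (k + 1 - k * exp l)).
Proof.
unfold g_red, g_red_diag_weight, s, sinh3_prim, sinh3_prim2, sinh, cosh.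
auto_derive; [easy|].
rewrite exp_Ropp. field. apply Rgt_not_eq, exp_pos.
Qed.

Lemma g_red_diag_weight_pos (k l : R) : 0 < k -> 0 <= l -> 0 < g_red_diag_weight k l.
Proof.
intros hk hl. pose proof (exp_ge1 l hl) as hE.
assert (hcosh : 0 < 1 + cosh l).
{ unfold cosh. pose proof (exp_pos l). pose proof (exp_pos (- l)). lra. }
assert (/ exp l <= 1) by (rewrite <- Rinv_1; apply Rinv_le_contravar; lra).
assert (0 < / exp l) by (apply Rinv_0_lt_compat; lra).
assert (0 <= k * (exp l - 1)) by (apply Rmult_le_pos; lra).
assert (0 <= (k + 1) * (1 - / exp l)) by (apply Rmult_le_pos; lra).
unfold g_red_diag_weight, Rdiv.
apply Rmult_lt_0_compat; [apply Rmult_lt_0_compat|]; [lra | | lra].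
assert (0 < ((k + 1) * (1 - / exp l) + 1) * / exp l) by (apply Rmult_lt_0_compat; lra).
lra.
Qed.

Lemma ln_one_plus_inv_pos (k : R) : 0 < k -> 0 < ln (1 + / k).
Proof.
intros hk. rewrite <- ln_1. apply ln_increasing; [lra|].
pose proof (Rinv_0_lt_compat k hk). lra.
Qed.

Lemma g_red_diag_strict_max (k l : R) : 0 < k -> 0 <= l -> l <> ln (1 + / k) ->
  g_red l k k < g_red (ln (1 + / k)) k k.
Proof.
intros hk hl hne.
assert (hk1 : 1 < 1 + / k) by (pose proof (Rinv_0_lt_compat k hk); lra).
pose proof (ln_one_plus_inv_pos k hk) as hl0.
set (l0 := ln (1 + / k)) in *.
assert (hfactor : forall x, k + 1 - k * exp x = k * (exp l0 - exp x))
  by (intros; unfold l0; rewrite exp_ln by lra; field; lra).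
apply (strict_max_of_derive_sign (fun l => g_red l k k)
         (fun l => g_red_diag_weight k l * (k + 1 - k * exp l)) 0); try easy.
- intros x. apply g_red_diag_derive.
- intros x hx. rewrite hfactor.
  apply Rmult_lt_0_compat; [apply g_red_diag_weight_pos; lra|].
  apply Rmult_lt_0_compat; [easy|]. pose proof (exp_increasing x l0). lra.
- intros x hx. rewrite hfactor.
  assert (0 < g_red_diag_weight k x * (k * (exp x - exp l0))); [|lra].
  apply Rmult_lt_0_compat; [apply g_red_diag_weight_pos; lra|].
  apply Rmult_lt_0_compat; [easy|]. pose proof (exp_increasing l0 x). lra.
Qed.

Definition phi (k : R) : R := 6 * ln (1 + / k) + / k + / (k + 1).

Lemma g_red_diag_max_value (k : R) : 0 < k -> 9 * g_red (ln (1 + / k)) k k = phi k.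
Proof.
intros hk. assert (0 < / k) by (apply Rinv_0_lt_compat; lra).
unfold g_red, s, sinh3_prim, sinh3_prim2, sinh, cosh, phi.
rewrite exp_Ropp, exp_ln by lra. field. lra.
Qed.

Lemma g_red_diag_le_max_value (k l : R) : 0 < k -> 0 <= l -> 9 * g_red l k k <= phi k.
Proof.
intros hk hl. rewrite <- g_red_diag_max_value by easy.
destruct (Req_dec l (ln (1 + / k))) as [-> | hne]; [lra|].
pose proof (g_red_diag_strict_max k l hk hl hne). lra.
Qed.

Lemma ln_one_plus_inv_midconvex (a b : R) : 0 < a -> 0 < b ->
  2 * ln (1 + / (a * b)) <= ln (1 + / (a * a)) + ln (1 + / (b * b)).
Proof.
intros ha hb.
assert (0 < / (a * b)) by (apply Rinv_0_lt_compat; nra).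
assert (0 < / (a * a)) by (apply Rinv_0_lt_compat; nra).
assert (0 < / (b * b)) by (apply Rinv_0_lt_compat; nra).
rewrite <- ln_mult by lra.
replace (2 * ln (1 + / (a * b))) with (ln ((1 + / (a * b)) * (1 + / (a * b))))
  by (rewrite ln_mult by lra; ring).
apply ln_le; [nra|].
assert (hcs : (1 + / (a * a)) * (1 + / (b * b)) - (1 + / (a * b)) * (1 + / (a * b))
              = ((a - b) / (a * b)) ^ 2) by (field; lra).
pose proof (pow2_ge_0 ((a - b) / (a * b))). lra.
Qed.

Lemma inv_plus_inv_succ_strict_midconvex (a b : R) : 0 < a -> 0 < b -> a <> b ->
  2 * (/ (a * b) + / (a * b + 1)) < / (a * a) + / (a * a + 1) + (/ (b * b) + / (b * b + 1)).
Proof.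
intros ha hb hab.
set (N := 2 * (a * b) ^ 3 + a ^ 3 * b + a * b ^ 3 + a * a + b * b + a * b + 1).
set (D := (a * b) ^ 2 * (a * a + 1) * (b * b + 1) * (a * b + 1)).
assert (hab0 : 0 < a * b) by nra.
assert (hN : 0 < N).
{ unfold N. pose proof (pow_lt _ 3 hab0). pose proof (pow_lt _ 3 ha). pose proof (pow_lt _ 3 hb).
  assert (0 < a ^ 3 * b) by nra. assert (0 < a * b ^ 3) by nra. nra. }
assert (hD : 0 < D).
{ unfold D. pose proof (pow_lt _ 2 hab0).
  repeat apply Rmult_lt_0_compat; nra. }
assert (hdiff : / (a * a) + / (a * a + 1) + (/ (b * b) + / (b * b + 1))
                - 2 * (/ (a * b) + / (a * b + 1)) = (a - b) ^ 2 * N / D).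
{ unfold N, D. field. repeat split; nra. }
assert (0 < (a - b) ^ 2) by (apply pow2_gt_0; lra).
assert (0 < (a - b) ^ 2 * N / D)
  by (apply Rmult_lt_0_compat; [nra | apply Rinv_0_lt_compat; lra]).
lra.
Qed.

Lemma phi_geomean_lt (u v : R) : 0 < u -> 0 < v -> u <> v ->
  2 * phi (sqrt (u * v)) < phi u + phi v.
Proof.
intros hu hv huv.
rewrite sqrt_mult by lra.
pose proof (sqrt_sqrt u ltac:(lra)) as hua. pose proof (sqrt_sqrt v ltac:(lra)) as hvb.
pose proof (sqrt_lt_R0 u hu). pose proof (sqrt_lt_R0 v hv).
set (a := sqrt u) in *. set (b := sqrt v) in *. clearbody a b. subst u v.
assert (a <> b) by (intros <-; easy).
pose proof (ln_one_plus_inv_midconvex a b).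
pose proof (inv_plus_inv_succ_strict_midconvex a b).
unfold phi. lra.
Qed.

Lemma phi_geomean_le (u v : R) : 0 < u -> 0 < v ->
  2 * phi (sqrt (u * v)) <= phi u + phi v.
Proof.
intros hu hv. destruct (Req_dec u v) as [<- | huv].
- rewrite sqrt_square by lra. lra.
- left. apply phi_geomean_lt; easy.
Qed.

Definition kappa (x : R) : R := (/ x - 1) / 2.

Lemma kappa_pos (x : R) : 0 < x < 1 -> 0 < kappa x.
Proof.
intros hx. unfold kappa.
assert (1 < / x) by (rewrite <- Rinv_1; apply Rinv_lt_contravar; lra). lra.
Qed.

Lemma kappa_inj (x y : R) : kappa x = kappa y -> x = y.
Proof. intros e. unfold kappa in e. apply Rinv_eq_reg. lra. Qed.

Lemma two_artanh_kappa (x : R) : 0 < x < 1 -> 2 * artanh x = ln (1 + / kappa x).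
Proof.
intros hx. unfold artanh, kappa. rewrite <- Rmult_assoc, Rinv_r, Rmult_1_l by lra.
f_equal. field. lra.
Qed.

Lemma tanh_pos_lt_1 (r : R) : 0 < r -> 0 < tanh r < 1.
Proof.
intros hr. assert (hE : 1 < exp r) by (rewrite <- exp_0; apply exp_increasing; lra).
replace (tanh r) with ((exp r * exp r - 1) / (exp r * exp r + 1)).
2:{ unfold tanh, sinh, cosh. rewrite exp_Ropp. field. split; nra. }
assert (0 < exp r * exp r + 1) by nra.
split.
- apply Rdiv_lt_0_compat; nra.
- apply Rmult_lt_reg_r with (exp r * exp r + 1); [easy|].
  unfold Rdiv. rewrite Rmult_assoc, Rinv_l; lra.
Qed.

Lemma tanh_cos_bounds (r a : R) : 0 < r -> 0 <= a < PI / 2 -> 0 < tanh r * cos a < 1.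
Proof.
intros hr ha. pose proof (tanh_pos_lt_1 r hr).
assert (0 < cos a) by (apply cos_gt_0; lra).
pose proof (COS_bound a). split; nra.
Qed.

Lemma gfun_g_red (r l a b : R) : 0 < r -> 0 <= a < PI / 2 -> 0 <= b < PI / 2 ->
  gfun r l a b = g_red l (kappa (tanh r * cos a)) (kappa (tanh r * cos b)).
Proof.
intros hr ha hb. pose proof (tanh_pos_lt_1 r hr).
assert (0 < cos a) by (apply cos_gt_0; lra).
assert (0 < cos b) by (apply cos_gt_0; lra).
unfold gfun, g_red, kappa. rewrite s_m1_closed_form, s_m2_closed_form.
field. repeat split; lra.
Qed.

Lemma Lub_Rbar_max (E : R -> Prop) (m : R) :
  E m -> (forall y, E y -> y <= m) -> Lub_Rbar E = m.
Proof.
intros hm hub. apply is_lub_Rbar_unique. split.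
- intros y hy. apply hub, hy.
- intros M hM. apply hM, hm.
Qed.

Lemma real_Lub_Rbar_le (E : R -> Prop) (M y0 : R) :
  E y0 -> (forall y, E y -> y <= M) -> real (Lub_Rbar E) <= M.
Proof.
intros hy0 hub. destruct (Lub_Rbar_correct E) as [ub least].
assert (h1 : Rbar_le y0 (Lub_Rbar E)) by (apply ub, hy0).
assert (h2 : Rbar_le (Lub_Rbar E) M) by (apply least; intros y hy; apply hub, hy).
destruct (Lub_Rbar E); easy.
Qed.

Lemma fsup_diag (r a : R) : 0 < r -> 0 <= a < PI / 2 ->
  fsup r a a = phi (kappa (tanh r * cos a)) / 9.
Proof.
intros hr ha. pose proof (kappa_pos _ (tanh_cos_bounds r a hr ha)) as hk.
unfold fsup. rewrite (Lub_Rbar_max _ (phi (kappa (tanh r * cos a)) / 9)); [easy | |].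
- exists (ln (1 + / kappa (tanh r * cos a))).
  split; [left; apply ln_one_plus_inv_pos; easy|].
  rewrite gfun_g_red, <- g_red_diag_max_value by easy. field.
- intros y [l [hl ->]]. rewrite gfun_g_red by easy.
  pose proof (g_red_diag_le_max_value _ l hk hl). lra.
Qed.

Lemma fsup_le_geomean (r a b : R) : 0 < r -> 0 <= a < PI / 2 -> 0 <= b < PI / 2 ->
  fsup r a b <= phi (sqrt (kappa (tanh r * cos a) * kappa (tanh r * cos b))) / 9.
Proof.
intros hr ha hb.
pose proof (kappa_pos _ (tanh_cos_bounds r a hr ha)) as hu.
pose proof (kappa_pos _ (tanh_cos_bounds r b hr hb)) as hv.
unfold fsup. apply real_Lub_Rbar_le with (gfun r 0 a b); [exists 0; split; easy|].
intros y [l [hl ->]]. rewrite gfun_g_red by easy.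
pose proof (g_red_le_geomean l _ _ hl hu hv).
assert (0 < sqrt (kappa (tanh r * cos a) * kappa (tanh r * cos b))) by (apply sqrt_lt_R0; nra).
pose proof (g_red_diag_le_max_value _ l ltac:(eassumption) hl). lra.
Qed.

Lemma gfun_diag_strict_max (r a l : R) : 0 < r -> 0 <= a < PI / 2 -> 0 <= l ->
  l <> 2 * artanh (tanh r * cos a) ->
  gfun r l a a < gfun r (2 * artanh (tanh r * cos a)) a a.
Proof.
intros hr ha hl hne. pose proof (tanh_cos_bounds r a hr ha) as hx.
rewrite two_artanh_kappa in * by easy. rewrite !gfun_g_red by easy.
apply g_red_diag_strict_max; [apply kappa_pos|..]; easy.
Qed.

Lemma fsup_le_diag_avg (r a b : R) : 0 < r -> 0 <= a < PI / 2 -> 0 <= b < PI / 2 ->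
  fsup r a b <= / 2 * (fsup r a a + fsup r b b) /\
  (fsup r a b = / 2 * (fsup r a a + fsup r b b) -> a = b).
Proof.
intros hr ha hb.
pose proof (tanh_cos_bounds r a hr ha) as hx. pose proof (tanh_cos_bounds r b hr hb) as hy.
pose proof (fsup_le_geomean r a b hr ha hb).
rewrite (fsup_diag r a), (fsup_diag r b) by easy.
set (u := kappa (tanh r * cos a)) in *. set (v := kappa (tanh r * cos b)) in *.
assert (hu : 0 < u) by (apply kappa_pos, hx). assert (hv : 0 < v) by (apply kappa_pos, hy).
pose proof (phi_geomean_le u v hu hv).
split; [lra|]. intros heq.
assert (huv : u = v).
{ destruct (Req_dec u v) as [|hne]; [easy|].
  pose proof (phi_geomean_lt u v hu hv hne). lra. }
apply kappa_inj in huv.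
pose proof (tanh_pos_lt_1 r hr). pose proof PI_RGT_0.
apply cos_inj; [lra | lra |]. apply (Rmult_eq_reg_l (tanh r)); [exact huv | lra].
Qed.

Theorem lemma5 (r : R) (hr : 0 < r) :
  (forall a, 0 <= a < PI / 2 ->
     let l0 := 2 * artanh (tanh r * cos a) in
     0 <= l0 /\
     forall l, 0 <= l -> l <> l0 -> gfun r l a a < gfun r l0 a a)
  /\
  (forall a b, 0 <= a < PI / 2 -> 0 <= b < PI / 2 ->
     fsup r a b <= / 2 * (fsup r a a + fsup r b b) /\
     (fsup r a b = / 2 * (fsup r a a + fsup r b b) -> a = b)).
Proof.
split.
- intros a ha l0. split.
  + pose proof (tanh_cos_bounds r a hr ha) as hx. unfold l0.
    rewrite two_artanh_kappa by easy. left. apply ln_one_plus_inv_pos, kappa_pos, hx.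
  + intros l hl hne. apply gfun_diag_strict_max; easy.
- intros a b ha hb. apply fsup_le_diag_avg; easy.
Qed.
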